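(* Let $X$ be a countable infinite set, $\mathcal{I}$ a $q^+$ and hereditarily meager ideal on $X$, and $\tau$ an $\mathcal{I}$-crowded topology on $X$ with $w(\tau)<\mathfrak{m}_c$. If $\langle F_i:i\in\omega\rangle$ is a sequence of pairwise disjoint finite subsets of $X$ such that $\bigcup_{i\in\omega}F_i$ is $(\mathcal{I},\tau)$-crowded, then there is an $(\mathcal{I},\tau)$-crowded $S\subseteq\bigcup_{i\in\omega}F_i$ such that $|S\cap F_i|\le 1$ for each $i$ and $cl_\tau(S)=cl_\tau(\bigcup_{i\in\omega}F_i)$.
   Context: An ideal on $X$ is a family of subsets of $X$ closed under subsets and finite unions; all ideals are assumed proper ($X\notin\mathcal{I}$) and free (every finite subset of $X$ is in $\mathcal{I}$). $\mathcal{I}^+=\mathcal{P}(X)\setminus\mathcal{I}$. Subsets of $X$ are identified with points of $2^X$. $\mathcal{I}$ is hereditarily meager if for every $A\in\mathcal{I}^+$, $\mathcal{I}\cap\mathcal{P}(A)$ is meager in $2^A$. $\mathcal{I}$ is $q^+$ if for every $A\in\mathcal{I}^+$ and every partition $(F_n)_n$ of $A$ into finite sets there is $S\subseteq A$ with $S\in\mathcal{I}^+$ and $|S\cap F_n|\le1$ for all $n$. A topology $\tau$ on $X$ is $\mathcal{I}$-crowded if $\tau\cap\mathcal{I}=\{\emptyset\}$. A set $A\subseteq X$ is $(\mathcal{I},\tau)$-crowded if for every $U\in\tau$, $A\cap U$ is either empty or in $\mathcal{I}^+$. $\mathfrak{m}_c$ is the least cardinal $\kappa$ such that MA$(\kappa)$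 for countable posets fails. $w$ denotes weight. *)

From Stdlib Require Import List Classical.
Import ListNotations.

Section Defs.
Variable X : Type.

Definition subset (A B : X -> Prop) : Prop := forall x, A x -> B x.
Definition inter (A B : X -> Prop) : X -> Prop := fun x => A x /\ B x.
Definition union2 (A B : X -> Prop) : X -> Prop := fun x => A x \/ B x.
Definition is_empty (A : X -> Prop) : Prop := forall x, ~ A x.
Definition finite (A : X -> Prop) : Prop :=
  exists l : list X, forall x, A x -> In x l.

Definition countably_infinite : Prop :=
  exists f : nat -> X, (forall m n, f m = f n -> m = n) /\ (forall x, exists n, f n = x).

Definition is_ideal (I : (X -> Prop) -> Prop) : Prop :=
  (forall A B, subset B A -> I A -> I B) /\
  (forall A B, I A -> I B -> I (union2 A B)) /\
  ~ I (fun _ => True) /\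
  (forall A, finite A -> I A).

Definition positive (I : (X -> Prop) -> Prop) (A : X -> Prop) : Prop := ~ I A.

(* The Cantor space 2^A: its points are the subsets B of A.
   Basic clopen sets are given by finite disjoint s, t ⊆ A:
   [s,t] = { B ⊆ A | s ⊆ B and t ∩ B = ∅ } (nonempty exactly when s,t disjoint). *)
Definition basic_cond (A : X -> Prop) (s t : list X) : Prop :=
  (forall x, In x s -> A x) /\ (forall x, In x t -> A x) /\
  (forall x, In x s -> ~ In x t).

Definition in_basic (s t : list X) (B : X -> Prop) : Prop :=
  (forall x, In x s -> B x) /\ (forall x, In x t -> ~ B x).

Definition nowhere_dense_in (A : X -> Prop) (N : (X -> Prop) -> Prop) : Prop :=
  forall s t, basic_cond A s t ->
    exists s' t', basic_cond A s' t' /\ incl s s' /\ incl t t' /\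
      forall B, subset B A -> in_basic s' t' B -> ~ N B.

Definition meager_in (A : X -> Prop) (F : (X -> Prop) -> Prop) : Prop :=
  exists N : nat -> ((X -> Prop) -> Prop),
    (forall n, nowhere_dense_in A (N n)) /\
    (forall B, subset B A -> F B -> exists n, N n B).

Definition hereditarily_meager (I : (X -> Prop) -> Prop) : Prop :=
  forall A, positive I A -> meager_in A (fun B => I B /\ subset B A).

Definition pairwise_disjoint (F : nat -> X -> Prop) : Prop :=
  forall i j x, i <> j -> F i x -> F j x -> False.

Definition big_union (F : nat -> X -> Prop) : X -> Prop := fun x => exists i, F i x.

Definition selector (S : X -> Prop) (F : nat -> X -> Prop) : Prop :=
  forall i x y, S x -> F i x -> S y -> F i y -> x = y.

Definition q_plus (I : (X -> Prop) -> Prop) : Prop :=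
  forall A, positive I A ->
  forall F : nat -> X -> Prop,
    (forall n, finite (F n)) -> pairwise_disjoint F ->
    (forall x, A x <-> big_union F x) ->
    exists S, subset S A /\ positive I S /\ selector S F.

Definition is_topology (tau : (X -> Prop) -> Prop) : Prop :=
  tau (fun _ => True) /\
  (forall U V, tau U -> tau V -> tau (inter U V)) /\
  (forall Fam : (X -> Prop) -> Prop, (forall U, Fam U -> tau U) ->
     tau (fun x => exists U, Fam U /\ U x)).

Definition I_crowded_topology (I tau : (X -> Prop) -> Prop) : Prop :=
  forall U, tau U -> I U -> is_empty U.

Definition I_tau_crowded (I tau : (X -> Prop) -> Prop) (A : X -> Prop) : Prop :=
  forall U, tau U -> is_empty (inter A U) \/ positive I (inter A U).

Definition closure (tau : (X -> Prop) -> Prop) (A : X -> Prop) : X -> Prop :=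
  fun x => forall U, tau U -> U x -> exists y, U y /\ A y.

Definition is_base (tau : (X -> Prop) -> Prop) (K : Type) (B : K -> X -> Prop) : Prop :=
  (forall k, tau (B k)) /\
  (forall U x, tau U -> U x -> exists k, B k x /\ subset (B k) U).

End Defs.

Arguments subset {X}. Arguments inter {X}. Arguments union2 {X}.
Arguments is_empty {X}. Arguments finite {X}. Arguments is_ideal {X}.
Arguments positive {X}. Arguments hereditarily_meager {X}.
Arguments pairwise_disjoint {X}. Arguments big_union {X}. Arguments selector {X}.
Arguments q_plus {X}. Arguments is_topology {X}. Arguments I_crowded_topology {X}.
Arguments I_tau_crowded {X}. Arguments closure {X}. Arguments is_base {X}.
Arguments basic_cond {X}. Arguments in_basic {X}. Arguments nowhere_dense_in {X}.
Arguments meager_in {X}.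

Definition MA_countable (K : Type) : Prop :=
  forall (P : Type) (le : P -> P -> Prop),
    inhabited P ->
    (exists f : P -> nat, forall p q, f p = f q -> p = q) ->
    (forall p, le p p) ->
    (forall p q r, le p q -> le q r -> le p r) ->
    (forall p q, le p q -> le q p -> p = q) ->
    forall D : K -> P -> Prop,
      (forall k p, exists q, le q p /\ D k q) ->
      exists G : P -> Prop,
        (exists p, G p) /\
        (forall p q, G p -> le p q -> G q) /\
        (forall p q, G p -> G q -> exists r, G r /\ le r p /\ le r q) /\
        (forall k, exists p, G p /\ D k p).

(* |K| < m_c, where m_c is the least cardinal kappa for which MA(kappa) for
   countable posets fails: every cardinal <= |K| satisfies MA. *)
Definition below_mc (K : Type) : Prop :=
  forall (K' : Type) (f : K' -> K), (forall a b, f a = f b -> a = b) -> MA_countable K'.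

Definition weight_below_mc {X : Type} (tau : (X -> Prop) -> Prop) : Prop :=
  exists (K : Type) (B : K -> X -> Prop), is_base tau K B /\ below_mc K.

From Stdlib Require Import List Classical ClassicalEpsilon ProofIrrelevance.
From Stdlib Require Import FunctionalExtensionality PropExtensionality FinFun Arith Lia Cantor.
From mathcomp Require classical_sets.
Import ListNotations.

(* Force with finite partial selectors of the blocks F i, each carrying a finite set of
   points promised to stay out of the final selector, ordered by reverse inclusion: as X
   is countable, this poset is countable.  For every basic open set B k meeting the union,
   q+ yields a positive selector T k inside B k, and hereditary meagerness covers the
   I-small subsets of T k by nowhere dense sets N k n.  Each N k n is avoided by a dense
   set of conditions, so MA for the |K| * omega < m_c dense sets gives a selector S with
   S ∩ T k, hence S ∩ B k, I-positive whenever B k meets the union; crowdedness and the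
   equality of closures follow.  The cardinal arithmetic |K * omega| <= |K| for
   uncountable K comes from Zorn's lemma applied to families of disjoint injective
   omega-sequences. *)

Lemma zorn_union (T : Type) (P : (T -> Prop) -> Prop) :
  (forall Fam : (T -> Prop) -> Prop, (forall A, Fam A -> P A) ->
     (forall A B, Fam A -> Fam B -> subset A B \/ subset B A) ->
     P (fun x => exists2 A, Fam A & A x)) ->
  exists A, P A /\ forall B, subset A B -> ~ subset B A -> ~ P B.
Proof.
  intros Hchain.
  destruct (@classical_sets.Zorn_bigcup T P Hchain) as [A [HA Hmax]].
  exists A. split; [exact HA|]. intros B HAB HBA. apply Hmax. split; assumption.
Qed.

Lemma injective_seq_in (K : Type) (L : K -> Prop) :
  (forall l : list K, exists k, L k /\ ~ In k l) ->
  exists e : nat -> K, Injective e /\ forall n, L (e n).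
Proof.
  intros Hfresh.
  destruct (choice _ Hfresh) as [pick Hpick].
  pose (prefix := fix prefix n := match n with 0 => [] | S m => pick (prefix m) :: prefix m end).
  assert (Hprefix : forall m n, m < n -> In (pick (prefix m)) (prefix n)).
  { intros m n Hmn. induction Hmn; simpl; auto. }
  exists (fun n => pick (prefix n)). split; [|intro n; apply Hpick].
  intros m n Heq. destruct (Nat.lt_total m n) as [Hlt|[Heq'|Hlt]]; auto; exfalso.
  - apply (proj2 (Hpick (prefix n))). rewrite <- Heq. apply Hprefix, Hlt.
  - apply (proj2 (Hpick (prefix m))). rewrite Heq. apply Hprefix, Hlt.
Qed.

Definition disjoint_injective_seqs {K : Type} (M : (nat -> K) -> Prop) : Prop :=
  (forall e, M e -> Injective e) /\
  (forall e e' i j, M e -> M e' -> e i = e' j -> e = e').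

Lemma disjoint_injective_seqs_cofinite (K : Type) :
  exists M : (nat -> K) -> Prop, disjoint_injective_seqs M /\
    exists l, forall k, (forall e i, M e -> e i <> k) -> In k l.
Proof.
  destruct (zorn_union _ (@disjoint_injective_seqs K)) as [M [[HMinj HMdisj] Hmax]].
  { intros Fam HFam Hchain. split.
    - intros e [A HA He]. exact (proj1 (HFam A HA) e He).
    - intros e e' i j [A HA He] [B HB He'] Heq.
      destruct (Hchain A B HA HB) as [HAB|HBA].
      + exact (proj2 (HFam B HB) e e' i j (HAB e He) He' Heq).
      + exact (proj2 (HFam A HA) e e' i j He (HBA e' He') Heq). }
  exists M. split; [split; assumption|].
  apply NNPP. intros Hinf.
  destruct (injective_seq_in K (fun k => forall e i, M e -> e i <> k)) as [e0 [He0 Hfree]].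
  { intros l. apply NNPP. intros Hno. apply Hinf. exists l. intros k Hk.
    apply NNPP. intros Hkl. apply Hno. exists k. split; assumption. }
  apply (Hmax (fun e => M e \/ e = e0)).
  - intros e He. left. exact He.
  - intros Hsub. exact (Hfree 0 e0 0 (Hsub e0 (or_intror eq_refl)) eq_refl).
  - split.
    + intros e [He|He]; [auto|subst; assumption].
    + intros e e' i j [He|He] [He'|He'] Heq; subst; eauto;
        exfalso; eapply Hfree; eauto.
Qed.

Lemma countable_or_prod_nat_embeds (K : Type) :
  (exists f : K -> nat, Injective f) \/ (exists f : K * nat -> K, Injective f).
Proof.
  destruct (disjoint_injective_seqs_cofinite K) as [M [[HMinj HMdisj] [l Hl]]].
  destruct (classic (exists e0, M e0)) as [[e0 He0]|Hempty].
  - right.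
    (* Covered elements are addressed by (sequence, index, false), the finitely many
       others by (e0, position in l, true); (k, n) is then sent to the position
       2 <index, n> + flag of its address sequence. *)
    pose (address := fun k (a : (nat -> K) * nat * bool) =>
      M (fst (fst a)) /\
      if snd a then nth_error l (snd (fst a)) = Some k else fst (fst a) (snd (fst a)) = k).
    destruct (choice address) as [addr Haddr].
    { intros k. destruct (classic (exists e i, M e /\ e i = k)) as [[e [i [He Hi]]]|Hfree].
      - exists (e, i, false). split; assumption.
      - destruct (In_nth_error l k) as [j Hj].
        { apply Hl. intros e i He Hi. apply Hfree. exists e, i. split; assumption. }
        exists (e0, j, true). split; assumption. }
    exists (fun kn => let '(e, i, b) := addr (fst kn) in e (2 * to_nat (i, snd kn) + Nat.b2n b)).
    intros [k n] [k' n']. cbn [fst snd].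
    specialize (Haddr k) as Hk. specialize (Haddr k') as Hk'.
    destruct (addr k) as [[e i] b], (addr k') as [[e' i'] b'].
    destruct Hk as [He Hk], Hk' as [He' Hk']. cbn [fst snd] in *. intros Heq.
    assert (e' = e) as -> by (symmetry; eapply HMdisj; eauto).
    apply (HMinj e He) in Heq.
    assert (b' = b /\ to_nat (i, n) = to_nat (i', n')) as [-> Hpair]
      by (destruct b, b'; cbn [Nat.b2n] in Heq; (split; [reflexivity|lia]) || (exfalso; lia)).
    apply to_nat_inj in Hpair. injection Hpair as <- <-.
    destruct b; cbn in Hk, Hk'; congruence.
  - left.
    assert (Hpos : forall k, exists j, nth_error l j = Some k).
    { intros k. apply In_nth_error, Hl. intros e i He _. apply Hempty. exists e; exact He. }
    destruct (choice _ Hpos) as [pos Hpos'].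
    exists pos. intros k k' Heq.
    pose proof (Hpos' k). pose proof (Hpos' k'). congruence.
Qed.

Lemma rasiowa_sikorski (J : Type) : (exists f : J -> nat, Injective f) -> MA_countable J.
Proof.
  intros [c Hc] P le [p0] _ Hrefl Htrans _ D HD.
  assert (Hstep : forall mp : nat * P, exists q, le q (snd mp) /\ forall j, c j = fst mp -> D j q).
  { intros [m p]. cbn [fst snd].
    destruct (classic (exists j, c j = m)) as [[j Hj]|Hnone].
    - destruct (HD j p) as [q [Hqp Hq]]. exists q. split; [exact Hqp|].
      intros j' Hj'. rewrite (Hc j' j) by congruence. exact Hq.
    - exists p. split; [apply Hrefl|]. intros j Hj. exfalso. eauto. }
  destruct (choice _ Hstep) as [next Hnext].
  pose (chain := fix chain n := match n with 0 => p0 | S m => next (m, chain m) end).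
  assert (Hchain : forall m n, m <= n -> le (chain n) (chain m)).
  { intros m n Hmn. induction Hmn; [apply Hrefl|].
    eapply Htrans; [apply (Hnext (_, _))|exact IHHmn]. }
  exists (fun q => exists m, le (chain m) q). split; [|split; [|split]].
  - exists p0, 0. apply Hrefl.
  - intros p q [m Hm] Hpq. exists m. eapply Htrans; eassumption.
  - intros p q [m Hm] [m' Hm']. exists (chain (max m m')).
    split; [exists (max m m'); apply Hrefl|split].
    + apply (Htrans _ (chain m)); [apply Hchain; lia|exact Hm].
    + apply (Htrans _ (chain m')); [apply Hchain; lia|exact Hm'].
  - intros j. exists (chain (S (c j))). split; [exists (S (c j)); apply Hrefl|].
    apply (Hnext (c j, chain (c j))). reflexivity.
Qed.

Lemma below_mc_prod_nat (K : Type) : below_mc K -> MA_countable (K * nat).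
Proof.
  intros HK. destruct (countable_or_prod_nat_embeds K) as [[f Hf]|[f Hf]].
  - apply rasiowa_sikorski. exists (fun kn => to_nat (f (fst kn), snd kn)).
    intros [k n] [k' n'] Heq. apply to_nat_inj in Heq. injection Heq as Hk ->.
    rewrite (Hf k k' Hk). reflexivity.
  - exact (HK _ f Hf).
Qed.

Lemma finite_subset {X : Type} (A B : X -> Prop) : subset A B -> finite B -> finite A.
Proof. intros HAB [l Hl]. exists l. intros x Hx. apply Hl, HAB, Hx. Qed.

Lemma finite_union2 {X : Type} (A B : X -> Prop) : finite A -> finite B -> finite (union2 A B).
Proof.
  intros [la Hla] [lb Hlb]. exists (la ++ lb). intros x [Hx|Hx]; apply in_or_app; auto.
Qed.

Lemma finite_In {X : Type} (l : list X) : finite (fun x => In x l).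
Proof. exists l. auto. Qed.

Lemma list_filter_ex {X : Type} (l : list X) (Q : X -> Prop) :
  exists l', forall x, In x l' <-> In x l /\ Q x.
Proof.
  induction l as [|y l [l' Hl']].
  - exists []. simpl. tauto.
  - destruct (classic (Q y)) as [Hy|Hy].
    + exists (y :: l'). intros x. simpl. rewrite Hl'. split.
      * intros [<-|Hx]; tauto.
      * intros [[<-|Hx] HQ]; tauto.
    + exists l'. intros x. simpl. rewrite Hl'. split.
      * tauto.
      * intros [[<-|Hx] HQ]; tauto.
Qed.

Lemma finite_sets_coding (X : Type) :
  (exists index : X -> nat, Injective index) ->
  exists code : (X -> Prop) -> nat, forall A A' : X -> Prop,
    finite A -> finite A' -> code A = code A' -> forall x, A x <-> A' x.
Proof.
  intros [index Hindex].
  pose (decode := fun a x => Nat.testbit a (index x) = true).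
  assert (Hlist : forall l, exists a, forall x, decode a x <-> In x l).
  { induction l as [|y l [a Ha]].
    - exists 0. intros x. unfold decode. rewrite Nat.bits_0. simpl. split; [discriminate|tauto].
    - exists (Nat.setbit a (index y)). intros x. unfold decode in *.
      rewrite Nat.setbit_iff, Ha. simpl. split.
      + intros [Hxy|Hx]; [left; apply Hindex, Hxy|right; exact Hx].
      + intros [<-|Hx]; [left; reflexivity|right; exact Hx]. }
  assert (Hcode : forall A, exists a, finite A -> forall x, decode a x <-> A x).
  { intros A. destruct (classic (finite A)) as [[l Hl]|Hinf]; [|exists 0; tauto].
    destruct (list_filter_ex l A) as [l' Hl'].
    destruct (Hlist l') as [a Ha]. exists a. intros _ x. rewrite Ha, Hl'.
    split; [tauto|auto]. }
  destruct (choice _ Hcode) as [code Hcode'].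
  exists code. intros A A' HA HA' Heq x.
  rewrite <- (Hcode' A HA), <- (Hcode' A' HA'), Heq. reflexivity.
Qed.

Section Forcing.
Variables (X : Type) (F : nat -> X -> Prop) (J : Type)
  (T : J -> X -> Prop) (N : J -> (X -> Prop) -> Prop).
Hypotheses (F_finite : forall i, finite (F i)) (F_disjoint : pairwise_disjoint F)
  (T_union : forall j, subset (T j) (big_union F)) (T_selector : forall j, selector (T j) F)
  (N_nowhere_dense : forall j, nowhere_dense_in (T j) (N j)).

Definition same_block (A : X -> Prop) (x : X) : Prop := exists y i, A y /\ F i y /\ F i x.

Lemma finite_same_block (A : X -> Prop) : finite A -> finite (same_block A).
Proof.
  intros [l Hl].
  apply (finite_subset _ (same_block (fun y => In y l))).
  { intros x [y [i [Hy Hixy]]]. exists y, i. split; [apply Hl|]; assumption. }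
  clear Hl. induction l as [|y l IH].
  - exists []. intros x [z [i [[] _]]].
  - destruct (classic (exists i, F i y)) as [[i Hi]|Hnone].
    + apply (finite_subset _ (union2 (F i) (same_block (fun z => In z l)))).
      * intros x [z [j [[Hyz|Hz] [Hjz Hjx]]]].
        -- left. subst z. destruct (Nat.eq_dec i j) as [<-|Hij]; [exact Hjx|].
           exfalso. exact (F_disjoint i j y Hij Hi Hjz).
        -- right. exists z, j. auto.
      * apply finite_union2; [apply F_finite|exact IH].
    + apply (finite_subset _ (same_block (fun z => In z l))); [|exact IH].
      intros x [z [j [[Hyz|Hz] [Hjz Hjx]]]]; [subst z; exfalso; eauto|exists z, j; auto].
Qed.

(* B collects the points promised never to join the selector A. *)
Definition partial_selector (A B : X -> Prop) : Prop :=
  subset A (big_union F) /\ selector A F /\ forall x, A x -> ~ B x.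

Lemma partial_selector_extend (A B Tj s t : X -> Prop) :
  partial_selector A B -> subset Tj (big_union F) -> selector Tj F ->
  subset s Tj -> subset t Tj -> (forall x, s x -> ~ t x) ->
  (forall x, Tj x -> A x -> s x) ->
  (forall x, Tj x -> ~ A x -> B x \/ same_block A x -> t x) ->
  partial_selector (union2 A s) (union2 B t).
Proof.
  intros [HA [HAsel HAB]] HTj HTjsel Hs Ht Hst HAs Hnew.
  assert (Hcross : forall i x y, A x -> F i x -> s y -> F i y -> x = y).
  { intros i x y Hx Hix Hy Hiy. destruct (classic (A y)) as [HAy|HAy].
    - exact (HAsel i x y Hx Hix HAy Hiy).
    - exfalso. apply (Hst y Hy), Hnew; [apply Hs, Hy|exact HAy|].
      right. exists x, i. auto. }
  split; [|split].
  - intros x [Hx|Hx]; [apply HA, Hx|apply HTj, Hs, Hx].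
  - intros i x y [Hx|Hx] Hix [Hy|Hy] Hiy.
    + exact (HAsel i x y Hx Hix Hy Hiy).
    + exact (Hcross i x y Hx Hix Hy Hiy).
    + symmetry. exact (Hcross i y x Hy Hiy Hx Hix).
    + exact (HTjsel i x y (Hs x Hx) Hix (Hs y Hy) Hiy).
  - intros x [Hx|Hx] [HBx|Htx].
    + exact (HAB x Hx HBx).
    + exact (Hst x (HAs x (Ht x Htx) Hx) Htx).
    + destruct (classic (A x)) as [HAx|HAx]; [exact (HAB x HAx HBx)|].
      exact (Hst x Hx (Hnew x (Hs x Hx) HAx (or_introl HBx))).
    + exact (Hst x Hx Htx).
Qed.

Record condition := {
  cond_in : X -> Prop;
  cond_out : X -> Prop;
  cond_in_finite : finite cond_in;
  cond_out_finite : finite cond_out;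
  cond_partial : partial_selector cond_in cond_out }.

Definition extends (p q : condition) : Prop :=
  subset (cond_in q) (cond_in p) /\ subset (cond_out q) (cond_out p).

Lemma condition_ext (p q : condition) :
  (forall x, cond_in p x <-> cond_in q x) -> (forall x, cond_out p x <-> cond_out q x) -> p = q.
Proof.
  destruct p as [A B HA HB HAB], q as [A' B' HA' HB' HAB']. cbn. intros Hin Hout.
  assert (A' = A) as ->.
  { apply functional_extensionality. intros x. apply propositional_extensionality.
    symmetry. apply Hin. }
  assert (B' = B) as ->.
  { apply functional_extensionality. intros x. apply propositional_extensionality.
    symmetry. apply Hout. }
  f_equal; apply proof_irrelevance.
Qed.

Lemma conditions_countable :
  (exists index : X -> nat, Injective index) -> exists f : condition -> nat, Injective f.
Proof.
  intros Hindex. destruct (finite_sets_coding X Hindex) as [code Hcode].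
  exists (fun p => to_nat (code (cond_in p), code (cond_out p))).
  intros p q Heq. apply to_nat_inj in Heq. injection Heq as Hin Hout.
  apply condition_ext.
  - exact (Hcode _ _ (cond_in_finite p) (cond_in_finite q) Hin).
  - exact (Hcode _ _ (cond_out_finite p) (cond_out_finite q) Hout).
Qed.

Definition avoids (j : J) (p : condition) : Prop :=
  forall Y, subset Y (T j) ->
    (forall x, T j x -> cond_in p x -> Y x) ->
    (forall x, T j x -> cond_out p x -> ~ Y x) -> ~ N j Y.

Lemma avoids_dense (j : J) (p : condition) : exists q, extends q p /\ avoids j q.
Proof.
  destruct p as [A B [la Hla] [lb Hlb] HAB]. unfold extends, avoids. cbn [cond_in cond_out].
  destruct (finite_same_block A (ex_intro _ la Hla)) as [lblk Hlblk].
  destruct (list_filter_ex la (fun x => T j x /\ A x)) as [s0 Hs0].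
  destruct (list_filter_ex (lb ++ lblk)
    (fun x => T j x /\ ~ A x /\ (B x \/ same_block A x))) as [t0 Ht0].
  assert (Hbasic : basic_cond (T j) s0 t0).
  { split; [|split].
    - intros x Hx. apply Hs0 in Hx. tauto.
    - intros x Hx. apply Ht0 in Hx. tauto.
    - intros x Hx Hx'. apply Hs0 in Hx. apply Ht0 in Hx'. tauto. }
  destruct (N_nowhere_dense j s0 t0 Hbasic)
    as [s [t [[Hs [Ht Hst]] [Hs0s [Ht0t Havoid]]]]].
  assert (Hq : partial_selector (union2 A (fun x => In x s)) (union2 B (fun x => In x t))).
  { apply (partial_selector_extend A B (T j)); auto.
    - intros x HTx HAx. apply Hs0s, Hs0. auto.
    - intros x HTx HAx Hnew. apply Ht0t, Ht0. split; [|auto].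
      apply in_or_app. destruct Hnew as [HBx|Hblk]; [left; apply Hlb, HBx|right; apply Hlblk, Hblk]. }
  exists (Build_condition _ _ (finite_union2 _ _ (ex_intro _ la Hla) (finite_In s))
    (finite_union2 _ _ (ex_intro _ lb Hlb) (finite_In t)) Hq).
  cbn [cond_in cond_out]. split; [split; intros x Hx; left; exact Hx|].
  intros Y HY Hin Hout. apply Havoid; [exact HY|split].
  - intros x Hx. apply Hin; [apply Hs, Hx|right; exact Hx].
  - intros x Hx. apply Hout; [apply Ht, Hx|right; exact Hx].
Qed.

Lemma generic_selector :
  (exists index : X -> nat, Injective index) -> MA_countable J ->
  exists S, subset S (big_union F) /\ selector S F /\ forall j, ~ N j (inter S (T j)).
Proof.
  intros Hindex HMA.
  destruct (HMA condition extends) with (D := avoids)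
    as [G [_ [_ [Gdir Gavoid]]]].
  - constructor. refine (Build_condition (fun _ => False) (fun _ => False) _ _ _).
    + exists []. tauto.
    + exists []. tauto.
    + split; [|split]; intro; contradiction.
  - exact (conditions_countable Hindex).
  - intros p. split; intros x Hx; exact Hx.
  - intros p q r [Hin Hout] [Hin' Hout']. split; intros x Hx; auto.
  - intros p q [Hin Hout] [Hin' Hout'].
    apply condition_ext; intros x; split; auto.
  - intros j p. apply avoids_dense.
  - pose (S := fun x => exists2 p, G p & cond_in p x).
    assert (Hcompat : forall p q x, G p -> G q -> cond_in p x -> cond_out q x -> False).
    { intros p q x Gp Gq Hp Hq. destruct (Gdir p q Gp Gq) as [r [_ [[Hrp _] [_ Hrq]]]].
      destruct (cond_partial r) as [_ [_ Hr]]. exact (Hr x (Hrp x Hp) (Hrq x Hq)). }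
    exists S. split; [|split].
    + intros x [p _ Hx]. destruct (cond_partial p) as [Hp _]. exact (Hp x Hx).
    + intros i x y [p Gp Hx] Hix [q Gq Hy] Hiy.
      destruct (Gdir p q Gp Gq) as [r [_ [[Hrp _] [Hrq _]]]].
      destruct (cond_partial r) as [_ [Hr _]]. exact (Hr i x y (Hrp x Hx) Hix (Hrq y Hy) Hiy).
    + intros j. destruct (Gavoid j) as [p [Gp Hp]]. apply Hp.
      * intros x [_ Hx]. exact Hx.
      * intros x HTx Hx. split; [exists p|]; assumption.
      * intros x HTx Hx [[q Gq Hq] _]. exact (Hcompat q p x Gq Gp Hq Hx).
Qed.

End Forcing.

Lemma positive_selector_in_open {X : Type} (I tau : (X -> Prop) -> Prop)
    (F : nat -> X -> Prop) (U : X -> Prop) :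
  q_plus I -> (forall i, finite (F i)) -> pairwise_disjoint F ->
  I_tau_crowded I tau (big_union F) -> tau U -> (exists y, big_union F y /\ U y) ->
  exists T, subset T (big_union F) /\ subset T U /\ positive I T /\ selector T F.
Proof.
  intros Hq Hfin Hdisj Hcr HU [y Hy].
  destruct (Hcr U HU) as [Hempty|Hpos]; [exfalso; exact (Hempty y Hy)|].
  destruct (Hq _ Hpos (fun i => inter (F i) U)) as [T [HT [HTpos HTsel]]].
  - intros i. apply (finite_subset _ (F i)); [intros x [Hx _]; exact Hx|apply Hfin].
  - intros i j x Hij [Hi _] [Hj _]. exact (Hdisj i j x Hij Hi Hj).
  - intros x. split.
    + intros [[i Hi] HUx]. exists i. split; assumption.
    + intros [i [Hi HUx]]. split; [exists i|]; assumption.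
  - exists T. split; [|split; [|split]].
    + intros x Hx. exact (proj1 (HT x Hx)).
    + intros x Hx. exact (proj2 (HT x Hx)).
    + exact HTpos.
    + intros i x x' Hx Hix Hx' Hix'.
      exact (HTsel i x x' Hx (conj Hix (proj2 (HT x Hx))) Hx' (conj Hix' (proj2 (HT x' Hx')))).
Qed.

Lemma meager_selector_in_open {X : Type} (I tau : (X -> Prop) -> Prop)
    (F : nat -> X -> Prop) (U : X -> Prop) :
  q_plus I -> hereditarily_meager I -> (forall i, finite (F i)) -> pairwise_disjoint F ->
  I_tau_crowded I tau (big_union F) -> tau U ->
  exists (T : X -> Prop) (N : nat -> (X -> Prop) -> Prop),
    subset T (big_union F) /\ subset T U /\ selector T F /\
    (forall n, nowhere_dense_in T (N n)) /\
    ((exists y, big_union F y /\ U y) -> forall Y, subset Y T -> I Y -> exists n, N n Y).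
Proof.
  intros Hq Hhm Hfin Hdisj Hcr HU.
  destruct (classic (exists y, big_union F y /\ U y)) as [Hmeet|Hmiss].
  - destruct (positive_selector_in_open I tau F U Hq Hfin Hdisj Hcr HU Hmeet)
      as [T [HTF [HTU [HTpos HTsel]]]].
    destruct (Hhm T HTpos) as [N [HNnd HNcov]].
    exists T, N. split; [exact HTF|split; [exact HTU|split; [exact HTsel|split]]].
    + exact HNnd.
    + intros _ Y HY HIY. exact (HNcov Y HY (conj HIY HY)).
  - exists (fun _ => False), (fun _ _ => False). split; [|split; [|split; [|split]]].
    + intros x [].
    + intros x [].
    + intros i x y [].
    + intros n s t Hst. exists s, t.
      split; [exact Hst|split; [apply incl_refl|split; [apply incl_refl|]]].
      intros Y _ _ [].
    + intros Hmeet. contradiction.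
Qed.

Lemma crowded_closure_of_positive_traces {X K : Type} (I tau : (X -> Prop) -> Prop)
    (B : K -> X -> Prop) (A S : X -> Prop) :
  is_ideal I -> is_base tau K B -> subset S A ->
  (forall k, (exists y, A y /\ B k y) -> positive I (inter S (B k))) ->
  I_tau_crowded I tau S /\ (forall x, closure tau S x <-> closure tau A x).
Proof.
  intros [Hdown [_ [_ Hfinite]]] [HBopen HBbase] HSA Hpos. split.
  - intros U HU. destruct (classic (exists x, S x /\ U x)) as [[x [Sx Ux]]|Hmiss].
    + right. destruct (HBbase U x HU Ux) as [k [Hkx HkU]]. intros HI.
      apply (Hpos k); [exists x; split; [apply HSA|]; assumption|].
      apply (Hdown _ _ (fun y Hy => conj (proj1 Hy) (HkU y (proj2 Hy))) HI).
    + left. intros x [Sx Ux]. apply Hmiss. exists x. split; assumption.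
  - intros x. split.
    + intros Hx U HU Ux. destruct (Hx U HU Ux) as [y [Uy Sy]]. exists y. split; auto.
    + intros Hx U HU Ux. destruct (HBbase U x HU Ux) as [k [Hkx HkU]].
      destruct (Hx (B k) (HBopen k) Hkx) as [y [Hky Ay]].
      destruct (classic (exists z, B k z /\ S z)) as [[z [Hkz Sz]]|Hmiss].
      * exists z. split; [apply HkU|]; assumption.
      * exfalso. apply (Hpos k); [exists y; split; assumption|].
        apply Hfinite. exists []. intros z [Sz Hkz]. apply Hmiss. exists z. split; assumption.
Qed.

Theorem mainTheorem8 (X : Type) (I tau : (X -> Prop) -> Prop)
  (F : nat -> X -> Prop) :
  countably_infinite X ->
  is_ideal I -> q_plus I -> hereditarily_meager I ->
  is_topology tau -> I_crowded_topology I tau -> weight_below_mc tau ->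
  (forall i, finite (F i)) -> pairwise_disjoint F ->
  I_tau_crowded I tau (big_union F) ->
  exists S : X -> Prop,
    subset S (big_union F) /\
    I_tau_crowded I tau S /\
    selector S F /\
    (forall x, closure tau S x <-> closure tau (big_union F) x).
Proof.
  intros [enum [_ Henum]] HI Hq Hhm _ _ [K [B [Hbase HK]]] Hfin Hdisj Hcr.
  assert (Hindex : exists index : X -> nat, Injective index).
  { destruct (choice _ Henum) as [index Hindex]. exists index.
    intros x y Hxy. rewrite <- (Hindex x), <- (Hindex y), Hxy. reflexivity. }
  destruct (choice _ (fun k => meager_selector_in_open I tau F (B k) Hq Hhm Hfin Hdisj Hcr
                                 (proj1 Hbase k))) as [T HT].
  destruct (choice _ HT) as [N HN].
  destruct (generic_selector X F (K * nat) (fun kn => T (fst kn)) (fun kn => N (fst kn) (snd kn))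
              Hfin Hdisj) as [S [HSF [HSsel HSgen]]];
    [intros [k n]; destruct (HN k) as (? & _ & ? & ? & _); auto..
    |exact Hindex|exact (below_mc_prod_nat K HK)|].
  assert (Hpos : forall k, (exists y, big_union F y /\ B k y) -> positive I (inter S (B k))).
  { intros k Hmeet HIk. destruct (HN k) as [_ [HTB [_ [_ Hcover]]]].
    destruct (Hcover Hmeet (inter S (T k))) as [n Hn].
    - intros x [_ Hx]. exact Hx.
    - destruct HI as [Hdown _].
      exact (Hdown _ _ (fun x Hx => conj (proj1 Hx) (HTB x (proj2 Hx))) HIk).
    - exact (HSgen (k, n) Hn). }
  destruct (crowded_closure_of_positive_traces I tau B (big_union F) S HI Hbase HSF Hpos)
    as [Hcrowded Hclosure].
  exists S. auto.
Qed.
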